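(* Let $ABC$ be a nondegenerate triangle, let $P$ be a point not lying on any of the lines $BC$, $CA$, $AB$, and let $XYZ$ be a (nondegenerate) Miquel triangle of $P$ relative to $ABC$. (i) If $P$ lies in the interior of triangle $ABC$, then $P$ lies in the interior of triangle $XYZ$. (ii) If $P$ lies in the exterior of triangle $ABC$, then $P$ lies in the exterior of triangle $XYZ$.
   Context: Miquel triangle: given a triangle $ABC$ and a point $P$ not on the lines $BC,CA,AB$, a triangle $XYZ$ with $X$ on line $BC$, $Y$ on line $CA$, $Z$ on line $AB$ is called a Miquel triangle of $P$ relative to $ABC$ if $P$ lies on each of the three circles through $A,Y,Z$, through $B,Z,X$, and through $C,X,Y$ (the Miquel circles). The pedal triangle of $P$ is one such triangle, and all Miquel triangles of a fixed $P$ are similar to each other. *)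

From Stdlib Require Import Reals.
Open Scope R_scope.

Definition point : Type := (R * R)%type.

(* twice the signed area of triangle ABC *)
Definition cross (A B C : point) : R :=
  (fst B - fst A) * (snd C - snd A) - (snd B - snd A) * (fst C - fst A).

Definition collinear (A B C : point) : Prop := cross A B C = 0.

Definition on_line (B C X : point) : Prop := collinear B C X.

Definition dist2 (P Q : point) : R :=
  (fst P - fst Q) ^ 2 + (snd P - snd Q) ^ 2.

Definition on_circle_through (U V W P : point) : Prop :=
  ~ collinear U V W /\
  exists O : point,
    dist2 O U = dist2 O V /\ dist2 O U = dist2 O W /\ dist2 O U = dist2 O P.

Definition miquel_triangle (A B C P X Y Z : point) : Prop :=
  on_line B C X /\ on_line C A Y /\ on_line A B Z /\
  on_circle_through A Y Z P /\
  on_circle_through B Z X P /\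
  on_circle_through C X Y P.

Definition in_interior (A B C P : point) : Prop :=
  exists a b c : R, 0 < a /\ 0 < b /\ 0 < c /\ a + b + c = 1 /\
    fst P = a * fst A + b * fst B + c * fst C /\
    snd P = a * snd A + b * snd B + c * snd C.

Definition in_closed_triangle (A B C P : point) : Prop :=
  exists a b c : R, 0 <= a /\ 0 <= b /\ 0 <= c /\ a + b + c = 1 /\
    fst P = a * fst A + b * fst B + c * fst C /\
    snd P = a * snd A + b * snd B + c * snd C.

Definition in_exterior (A B C P : point) : Prop := ~ in_closed_triangle A B C P.

From Stdlib Require Import Reals Lra Psatz.
Open Scope R_scope.

(* At the vertex C, concyclicity of C, X, Y, P is the
   inscribed angle condition: the directed angle from line CB to PX equals the
   one from line CA to PY.  It forces the orientation of PXY times that of ABC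
   to have the sign of the product of the signed distances of P to BC and to
   CA.  At the three vertices this compares the barycentric coordinates of P
   with respect to XYZ with those with respect to ABC: if the latter all have
   one sign, so do the former; conversely, nonnegative coordinates with respect
   to XYZ are in fact nonzero and force those with respect to ABC to share a
   sign. *)

Definition vsub (P Q : point) : point := (fst P - fst Q, snd P - snd Q).
Definition vscale (k : R) (u : point) : point := (k * fst u, k * snd u).
Definition dot2 (u v : point) : R := fst u * fst v + snd u * snd v.
Definition det2 (u v : point) : R := fst u * snd v - snd u * fst v.

(* As complex numbers, [conj_mul a u] is [conj a * u], so that
   [det2 (conj_mul a u) (conj_mul b v) = 0] says that the directed angle from
   [a] to [u] equals the one from [b] to [v] modulo [PI]. *)
Definition conj_mul (a u : point) : point := (dot2 a u, det2 a u).

Ltac expand_points :=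
  repeat match goal with P : point |- _ => destruct P end;
  unfold conj_mul, cross, dist2, vsub, vscale, dot2, det2; simpl.

Lemma cross_cycle A B C : cross A B C = cross B C A.
Proof. expand_points; ring. Qed.

Lemma cross_swap A B C : cross A C B = - cross A B C.
Proof. expand_points; ring. Qed.

Lemma cross_swap12 A B C : cross B A C = - cross A B C.
Proof. expand_points; ring. Qed.

Lemma cross_sum A B C P : cross B C P + cross C A P + cross A B P = cross A B C.
Proof. expand_points; ring. Qed.

Lemma det2_vsub Q D E P : det2 (vsub D Q) (vsub E P) = cross Q D E - cross Q D P.
Proof. expand_points; ring. Qed.

Lemma det2_conj_mul_scale k l a u b v :
  det2 (conj_mul (vscale k a) u) (conj_mul (vscale l b) v)
  = k * l * det2 (conj_mul a u) (conj_mul b v).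
Proof. expand_points; ring. Qed.

Lemma collinear_swap A B C : collinear A B C -> collinear A C B.
Proof. unfold collinear. rewrite cross_swap. lra. Qed.

Lemma collinear_eq12 A B : collinear A A B.
Proof. unfold collinear. expand_points; ring. Qed.

Lemma collinear_eq13 A B : collinear A B A.
Proof. unfold collinear. expand_points; ring. Qed.

Lemma collinear_vscale Q D E :
  collinear Q D E -> D <> Q -> exists k, vsub E Q = vscale k (vsub D Q).
Proof.
  unfold collinear. destruct Q as [q1 q2], D as [d1 d2], E as [e1 e2].
  unfold cross, vsub, vscale; simpl. intros Hcol HDQ.
  set (n := (d1 - q1)² + (d2 - q2)²).
  assert (Hn : n <> 0).
  { intros Hn. apply HDQ. apply Rplus_sqr_eq_0 in Hn as [? ?]. f_equal; lra. }
  exists (((e1 - q1) * (d1 - q1) + (e2 - q2) * (d2 - q2)) / n).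
  assert (H1 : (d1 - q1) * ((d1 - q1) * (e2 - q2) - (d2 - q2) * (e1 - q1)) = 0)
    by (rewrite Hcol; ring).
  assert (H2 : (d2 - q2) * ((d1 - q1) * (e2 - q2) - (d2 - q2) * (e1 - q1)) = 0)
    by (rewrite Hcol; ring).
  f_equal; field_simplify_eq; auto; unfold n, Rsqr; lra.
Qed.

Lemma dist2_sub_center O Q P :
  dist2 O Q - dist2 O P
  = dot2 (vsub Q P) (vsub Q P) - 2 * dot2 (vsub Q P) (vsub O P).
Proof. expand_points; ring. Qed.

(* With [o := O - P] for the centre [O], equal radii give [|u|^2 = 2 u.o] for
   each of [u = U - P, V - P, W - P]; the claim is then the vector identity
   [u det(v, w) + v det(w, u) + w det(u, v) = 0] dotted with [2 o]. *)
Lemma concyclic_det U V W P :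
  on_circle_through U V W P ->
  dot2 (vsub U P) (vsub U P) * det2 (vsub V P) (vsub W P)
  + dot2 (vsub V P) (vsub V P) * det2 (vsub W P) (vsub U P)
  + dot2 (vsub W P) (vsub W P) * det2 (vsub U P) (vsub V P) = 0.
Proof.
  intros [_ [O [HV [HW HP]]]].
  pose proof (dist2_sub_center O U P) as EU.
  pose proof (dist2_sub_center O V P) as EV.
  pose proof (dist2_sub_center O W P) as EW.
  replace (dot2 (vsub U P) (vsub U P)) with (2 * dot2 (vsub U P) (vsub O P)) by lra.
  replace (dot2 (vsub V P) (vsub V P)) with (2 * dot2 (vsub V P) (vsub O P)) by lra.
  replace (dot2 (vsub W P) (vsub W P)) with (2 * dot2 (vsub W P) (vsub O P)) by lra.
  clear. expand_points; ring.
Qed.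

Lemma concyclic_angle C X Y P :
  on_circle_through C X Y P ->
  det2 (conj_mul (vsub X C) (vsub X P)) (conj_mul (vsub Y C) (vsub Y P)) = 0.
Proof.
  intros Hcirc. rewrite <- (concyclic_det _ _ _ _ Hcirc). clear Hcirc.
  expand_points; ring.
Qed.

Lemma pow2_pos x : x <> 0 -> 0 < x ^ 2.
Proof. intros Hx. rewrite <- Rsqr_pow2. now apply Rsqr_pos_lt. Qed.

Lemma dot2_self_pos w : w <> (0, 0) -> 0 < dot2 w w.
Proof.
  destruct w as [w1 w2]. unfold dot2; simpl. intros Hw.
  destruct (Req_dec w1 0) as [->|H1].
  - assert (w2 <> 0) by (intros ->; auto). nra.
  - nra.
Qed.

Lemma det2_neq0 w z : det2 w z <> 0 -> w <> (0, 0) /\ z <> (0, 0).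
Proof. intros H. split; intros ->; apply H; unfold det2; simpl; ring. Qed.

(* [p] and [q] are real multiples of each other, so [dot2 p q] has the sign
   of [snd p * snd q]; and [conj p * q = |a|^2 |b|^2 conj u * v / (conj a * b)]
   relates [dot2 p q] to [det2 u v] through [det2 a b]. *)
Lemma conj_mul_sign a u b v :
  det2 (conj_mul a u) (conj_mul b v) = 0 ->
  det2 a u <> 0 -> det2 b v <> 0 -> det2 a b <> 0 ->
  0 < det2 u v * det2 a b * det2 a u * det2 b v.
Proof.
  intros Hpar Hau Hbv Hab.
  set (p := conj_mul a u) in Hpar. set (q := conj_mul b v) in Hpar.
  assert (Huv : det2 u v * (dot2 a a * dot2 b b) = dot2 p q * det2 a b + det2 p q * dot2 a b)
    by (unfold p, q; expand_points; ring).
  assert (Hpq : dot2 p q * snd q = snd p * dot2 q q + fst q * det2 p q)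
    by (expand_points; ring).
  change (det2 a u) with (snd p) in Hau |- *. change (det2 b v) with (snd q) in Hbv |- *.
  rewrite Hpar, Rmult_0_l, Rplus_0_r in Huv. rewrite Hpar, Rmult_0_r, Rplus_0_r in Hpq.
  assert (Hq : 0 < dot2 q q).
  { apply dot2_self_pos. intros Hq0. apply Hbv. now rewrite Hq0. }
  assert (Hnorms : 0 < dot2 a a * dot2 b b).
  { apply det2_neq0 in Hab as [Ha Hb].
    apply Rmult_lt_0_compat; apply dot2_self_pos; assumption. }
  apply (Rmult_lt_reg_r (dot2 a a * dot2 b b)); [exact Hnorms|].
  rewrite Rmult_0_l.
  replace (det2 u v * det2 a b * snd p * snd q * (dot2 a a * dot2 b b))
    with (det2 u v * (dot2 a a * dot2 b b) * det2 a b * snd p * snd q) by ring.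
  rewrite Huv.
  replace (dot2 p q * det2 a b * det2 a b * snd p * snd q)
    with (dot2 p q * snd q * (snd p * det2 a b ^ 2)) by ring.
  rewrite Hpq.
  replace (snd p * dot2 q q * (snd p * det2 a b ^ 2))
    with (dot2 q q * (snd p * det2 a b) ^ 2) by ring.
  apply Rmult_lt_0_compat; [exact Hq|].
  apply pow2_pos, Rmult_integral_contrapositive_currified; assumption.
Qed.

Lemma miquel_vertex_sign Q D E P X Y :
  ~ collinear Q D E -> ~ collinear Q D P -> ~ collinear Q E P ->
  collinear Q D X -> collinear Q E Y -> on_circle_through Q X Y P ->
  0 < cross P X Y * cross Q D E * cross Q D P * cross Q E P.
Proof.
  intros HDE HDP HEP HX HY Hcirc.
  assert (HXQ : X <> Q) by (intros ->; apply (proj1 Hcirc), collinear_eq12).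
  assert (HYQ : Y <> Q) by (intros ->; apply (proj1 Hcirc), collinear_eq13).
  destruct (collinear_vscale Q X D (collinear_swap _ _ _ HX) HXQ) as [k Hk].
  destruct (collinear_vscale Q Y E (collinear_swap _ _ _ HY) HYQ) as [l Hl].
  assert (Hangle :
    det2 (conj_mul (vsub D Q) (vsub X P)) (conj_mul (vsub E Q) (vsub Y P)) = 0).
  { rewrite Hk, Hl, det2_conj_mul_scale, (concyclic_angle _ _ _ _ Hcirc). ring. }
  unfold collinear in *.
  pose proof (conj_mul_sign _ _ _ _ Hangle) as Hsign.
  rewrite (det2_vsub Q D X P), (det2_vsub Q E Y P), HX, HY in Hsign.
  change (det2 (vsub D Q) (vsub E Q)) with (cross Q D E) in Hsign.
  change (det2 (vsub X P) (vsub Y P)) with (cross P X Y) in Hsign.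
  replace (cross P X Y * cross Q D E * cross Q D P * cross Q E P)
    with (cross P X Y * cross Q D E * (0 - cross Q D P) * (0 - cross Q E P)) by ring.
  apply Hsign; lra.
Qed.

Lemma miquel_corner_sign A B C P X Y :
  ~ collinear A B C -> ~ on_line B C P -> ~ on_line C A P ->
  on_line B C X -> on_line C A Y -> on_circle_through C X Y P ->
  0 < cross X Y P * cross A B C * cross B C P * cross C A P.
Proof.
  unfold on_line, collinear.
  intros HABC HP1 HP2 HX HY Hcirc.
  pose proof (miquel_vertex_sign C B A P X Y) as Hsign.
  unfold collinear in Hsign.
  rewrite (cross_swap12 B C A), (cross_swap12 B C P), (cross_swap12 B C X),
    <- (cross_cycle A B C), (cross_cycle P X Y) in Hsign.
  replace (cross X Y P * cross A B C * cross B C P * cross C A P)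
    with (cross X Y P * - cross A B C * - cross B C P * cross C A P) by ring.
  apply Hsign; try apply Ropp_neq_0_compat; auto; lra.
Qed.

Lemma cross_barycentric A B C P a b c :
  a + b + c = 1 ->
  fst P = a * fst A + b * fst B + c * fst C ->
  snd P = a * snd A + b * snd B + c * snd C ->
  cross B C P = a * cross A B C /\ cross C A P = b * cross A B C /\
  cross A B P = c * cross A B C.
Proof.
  destruct P as [p1 p2]; simpl. intros Hs -> ->.
  replace c with (1 - a - b) by lra.
  expand_points; repeat split; ring.
Qed.

Lemma barycentric_of_cross A B C P :
  cross A B C <> 0 ->
  fst P = cross B C P / cross A B C * fst A + cross C A P / cross A B C * fst B
          + cross A B P / cross A B C * fst C /\
  snd P = cross B C P / cross A B C * snd A + cross C A P / cross A B C * snd B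
          + cross A B P / cross A B C * snd C.
Proof. expand_points. intros HS. split; field; exact HS. Qed.

Lemma div_pos_of_mul_pos x s : 0 < x * s -> 0 < x / s.
Proof.
  intros H. assert (Hs : s <> 0) by (intros ->; lra).
  replace (x / s) with (x * s * / (s * s)) by (field; exact Hs).
  apply Rmult_lt_0_compat; [exact H|]. apply Rinv_0_lt_compat. nra.
Qed.

Lemma in_interior_iff A B C P :
  ~ collinear A B C ->
  in_interior A B C P <->
  0 < cross B C P * cross A B C /\ 0 < cross C A P * cross A B C /\
  0 < cross A B P * cross A B C.
Proof.
  unfold collinear. intros HS. split.
  - intros (a & b & c & Ha & Hb & Hc & Hs & Hx & Hy).
    destruct (cross_barycentric A B C P a b c Hs Hx Hy) as (-> & -> & ->).
    assert (0 < cross A B C * cross A B C) by nra.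
    repeat split; nra.
  - intros (Ha & Hb & Hc).
    exists (cross B C P / cross A B C), (cross C A P / cross A B C),
      (cross A B P / cross A B C).
    destruct (barycentric_of_cross A B C P HS) as [Hx Hy].
    repeat split; auto using div_pos_of_mul_pos.
    transitivity ((cross B C P + cross C A P + cross A B P) / cross A B C);
      [field; exact HS|].
    rewrite cross_sum. field. exact HS.
Qed.

Lemma in_closed_triangle_cross A B C P :
  in_closed_triangle A B C P ->
  0 <= cross B C P * cross A B C /\ 0 <= cross C A P * cross A B C /\
  0 <= cross A B P * cross A B C.
Proof.
  intros (a & b & c & Ha & Hb & Hc & Hs & Hx & Hy).
  destruct (cross_barycentric A B C P a b c Hs Hx Hy) as (-> & -> & ->).
  assert (0 <= cross A B C * cross A B C) by nra.
  repeat split; nra.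
Qed.

Lemma in_interior_closed_triangle A B C P :
  in_interior A B C P -> in_closed_triangle A B C P.
Proof.
  intros (a & b & c & Ha & Hb & Hc & H).
  exists a, b, c. repeat split; try lra; apply H.
Qed.


Lemma pos_of_mul_sq x y : 0 < x * y ^ 2 -> 0 < x.
Proof. intros H. destruct (Rlt_or_le 0 x) as [|Hx]; [easy|]. nra. Qed.

Lemma pos_of_nonneg_mul x y : 0 <= x * y -> x <> 0 -> y <> 0 -> 0 < x * y.
Proof.
  intros H Hx Hy. destruct H as [|H]; [easy|].
  exfalso. apply (Rmult_integral_contrapositive_currified x y); auto.
Qed.

Lemma sign_transfer_interior s a b c kx ky kz t :
  t = kx + ky + kz ->
  0 < kz * s * a * b -> 0 < kx * s * b * c -> 0 < ky * s * c * a ->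
  0 < a * s -> 0 < b * s -> 0 < c * s ->
  0 < kx * t /\ 0 < ky * t /\ 0 < kz * t.
Proof.
  intros Ht Hz Hx Hy Ha Hb Hc.
  assert (Kz : 0 < kz * s).
  { apply (pos_of_mul_sq _ (a * b * s)).
    replace (kz * s * (a * b * s) ^ 2) with (kz * s * a * b * ((a * s) * (b * s))) by ring.
    apply Rmult_lt_0_compat; [|apply Rmult_lt_0_compat]; assumption. }
  assert (Kx : 0 < kx * s).
  { apply (pos_of_mul_sq _ (b * c * s)).
    replace (kx * s * (b * c * s) ^ 2) with (kx * s * b * c * ((b * s) * (c * s))) by ring.
    apply Rmult_lt_0_compat; [|apply Rmult_lt_0_compat]; assumption. }
  assert (Ky : 0 < ky * s).
  { apply (pos_of_mul_sq _ (c * a * s)).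
    replace (ky * s * (c * a * s) ^ 2) with (ky * s * c * a * ((c * s) * (a * s))) by ring.
    apply Rmult_lt_0_compat; [|apply Rmult_lt_0_compat]; assumption. }
  assert (Ts : 0 < t * s) by (subst t; lra).
  repeat split; apply (pos_of_mul_sq _ s).
  - replace (kx * t * s ^ 2) with (kx * s * (t * s)) by ring. now apply Rmult_lt_0_compat.
  - replace (ky * t * s ^ 2) with (ky * s * (t * s)) by ring. now apply Rmult_lt_0_compat.
  - replace (kz * t * s ^ 2) with (kz * s * (t * s)) by ring. now apply Rmult_lt_0_compat.
Qed.

Lemma pos_mul_sum a b c : 0 < a * b -> 0 < b * c -> 0 < c * a -> 0 < a * (a + b + c).
Proof. intros. assert (a <> 0) by (intros ->; lra). nra. Qed.

Lemma sign_transfer_closed s a b c kx ky kz t :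
  s = a + b + c -> t <> 0 ->
  0 < kz * s * a * b -> 0 < kx * s * b * c -> 0 < ky * s * c * a ->
  0 <= kx * t -> 0 <= ky * t -> 0 <= kz * t ->
  0 < a * s /\ 0 < b * s /\ 0 < c * s.
Proof.
  intros Hs Ht Hz Hx Hy Kx Ky Kz.
  apply pos_of_nonneg_mul in Kx; [|intros ->; lra|exact Ht].
  apply pos_of_nonneg_mul in Ky; [|intros ->; lra|exact Ht].
  apply pos_of_nonneg_mul in Kz; [|intros ->; lra|exact Ht].
  assert (Hab : 0 < a * b).
  { apply (pos_of_mul_sq _ (kx * ky * s * c * t)).
    replace (a * b * (kx * ky * s * c * t) ^ 2)
      with ((kx * s * b * c * (ky * s * c * a)) * ((kx * t) * (ky * t))) by ring.
    apply Rmult_lt_0_compat; apply Rmult_lt_0_compat; assumption. }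
  assert (Hbc : 0 < b * c).
  { apply (pos_of_mul_sq _ (ky * kz * s * a * t)).
    replace (b * c * (ky * kz * s * a * t) ^ 2)
      with ((ky * s * c * a * (kz * s * a * b)) * ((ky * t) * (kz * t))) by ring.
    apply Rmult_lt_0_compat; apply Rmult_lt_0_compat; assumption. }
  assert (Hca : 0 < c * a).
  { apply (pos_of_mul_sq _ (kz * kx * s * b * t)).
    replace (c * a * (kz * kx * s * b * t) ^ 2)
      with ((kz * s * a * b * (kx * s * b * c)) * ((kz * t) * (kx * t))) by ring.
    apply Rmult_lt_0_compat; apply Rmult_lt_0_compat; assumption. }
  subst s. repeat split.
  - now apply pos_mul_sum.
  - replace (b * (a + b + c)) with (b * (b + c + a)) by ring. now apply pos_mul_sum.
  - replace (c * (a + b + c)) with (c * (c + a + b)) by ring. now apply pos_mul_sum.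
Qed.

Theorem lemma1 (A B C P X Y Z : point) :
  ~ collinear A B C ->
  ~ on_line B C P -> ~ on_line C A P -> ~ on_line A B P ->
  miquel_triangle A B C P X Y Z ->
  ~ collinear X Y Z ->
  (in_interior A B C P -> in_interior X Y Z P) /\
  (in_exterior A B C P -> in_exterior X Y Z P).
Proof.
  intros HABC HPa HPb HPc (HX & HY & HZ & HcA & HcB & HcC) HXYZ.
  assert (HBCA : ~ collinear B C A)
    by (unfold collinear; now rewrite <- (cross_cycle A B C)).
  assert (HCAB : ~ collinear C A B)
    by (unfold collinear; now rewrite <- (cross_cycle B C A), <- (cross_cycle A B C)).
  pose proof (miquel_corner_sign A B C P X Y HABC HPa HPb HX HY HcC) as Hz.
  pose proof (miquel_corner_sign B C A P Y Z HBCA HPb HPc HY HZ HcA) as Hx.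
  pose proof (miquel_corner_sign C A B P Z X HCAB HPc HPa HZ HX HcB) as Hy.
  rewrite <- (cross_cycle A B C) in Hx.
  rewrite <- (cross_cycle B C A), <- (cross_cycle A B C) in Hy.
  split.
  - intros Hin. apply in_interior_iff; [exact HXYZ|].
    apply (in_interior_iff _ _ _ _ HABC) in Hin as (Ha & Hb & Hc).
    apply (sign_transfer_interior (cross A B C) (cross B C P) (cross C A P) (cross A B P));
      auto using eq_sym, cross_sum.
  - intros Hext Hclosed. apply Hext, in_interior_closed_triangle, in_interior_iff; [exact HABC|].
    apply in_closed_triangle_cross in Hclosed as (Kx & Ky & Kz).
    apply (sign_transfer_closed _ _ _ _ (cross Y Z P) (cross Z X P) (cross X Y P) (cross X Y Z));
      auto using eq_sym, cross_sum.
Qed.
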